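(* Let $x_1,\dots,x_n\ge0$ be real numbers and $P_n(z)=(z-x_1)\cdots(z-x_n)$. Then $d_1\big(Z(P_n),Z(P_n')\cup\{0\}\big)=\frac1n\sum_{i=1}^n x_i$.
   Context: For a polynomial $P$, $Z(P)$ is the multiset of its zeros (with multiplicity); $Z(P_n')\cup\{0\}$ denotes the multiset of the $n-1$ critical points of $P_n$ together with one additional point $0$. For multisets $U=\{u_1,\dots,u_n\}$, $V=\{v_1,\dots,v_n\}$, $d_1(U,V)=\min_{\pi\in\mathfrak{S}_n}\sum_{i=1}^n|u_i-v_{\pi(i)}|$. *)

From HB Require Import structures.
From mathcomp Require Import all_boot all_order all_algebra.
Set Implicit Arguments. Unset Strict Implicit. Unset Printing Implicit Defensive.
Import Order.TTheory GRing.Theory Num.Theory.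
Local Open Scope ring_scope.

Definition match_cost (R : numDomainType) (U V : seq R) : R :=
  \sum_(i < size U) `|U`_i - V`_i|.

(* d_1(U,V) = min over all permutations (orderings) s of V of
   sum_i |u_i - s_i|.  [permutations V] lists all reorderings of V; V itself
   is the starting value of the min (it is also in the list). *)
Definition d1 (R : realDomainType) (U V : seq R) : R :=
  foldr Num.min (match_cost U V) [seq match_cost U s | s <- permutations V].

Definition zeros_multiset (R : idomainType) (p : {poly R}) (s : seq R) : Prop :=
  p != 0 /\ p = lead_coef p *: \prod_(y <- s) ('X - y%:P).

From HB Require Import structures.
From mathcomp Require Import all_boot all_order all_algebra.
From mathcomp Require Import polyorder polyrcf.
From mathcomp Require Import zify.
Import Order.TTheory GRing.Theory Num.Theory.
Local Open Scope ring_scope.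

(* Below any threshold t there is at most one more root than critical point: a root of
   multiplicity k is a critical point of multiplicity k - 1, and Rolle's theorem puts a
   critical point between consecutive distinct roots.  As the roots are nonnegative, the
   critical points together with 0 are therefore stochastically dominated by the roots, so an
   optimal matching moves every point downwards and d_1 is the difference of the two sums.
   Comparing the two leading coefficients of P' = n \prod (X - y) (Vieta) shows that the sum
   of the critical points is (n - 1)/n times the sum of the roots. *)

Section OrderedCounts.
Context {disp : Order.disp_t} {T : orderType disp}.
Local Open Scope order_scope.
Implicit Types (s U V xs ys : seq T) (a b t : T).

Lemma has_max (P : pred T) s : has P s ->
  exists m, [/\ m \in s, P m & {in s, forall w, P w -> w <= m}].
Proof.
elim: s => //= z s IH; have [/IH[m [ms Pm mmax]] _|/hasPn noP] := boolP (has P s).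
  have [/andP[Pz lt_mz]|Nz] := boolP (P z && (m < z)).
    exists z; split; rewrite ?mem_head // => w; rewrite inE => /predU1P[->//|ws Pw].
    exact: le_trans (mmax w ws Pw) (ltW lt_mz).
  exists m; split; rewrite ?inE ?ms ?orbT // => w; rewrite inE => /predU1P[-> Pz|].
    by move: Nz; rewrite Pz -leNgt.
  exact: mmax.
rewrite orbF => Pz; exists z; split; rewrite ?mem_head // => w.
by rewrite inE => /predU1P[->//|/noP/negbTE->].
Qed.

Lemma count_le_split b a s : b < a ->
  count (<= a) s = (count (<= b) s + count (fun z => (b < z < a)%O) s + count_mem a s)%N.
Proof.
move=> lt_ba; elim: s => //= z s ->.
have [lt_za|lt_az|->] := ltgtP z a.
- by rewrite andbT; case: leP => _ /=; lia.
- by rewrite andbF leNgt (lt_trans lt_ba lt_az) /=; lia.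
- by rewrite andbF leNgt lt_ba /=; lia.
Qed.

(* The greedy matching: the largest element of V that is at most the head of U is matched to it. *)
Lemma perm_all2_le_of_count U V : size U = size V ->
  (forall t, count (<= t) U <= count (<= t) V)%N ->
  exists2 s, perm_eq s V & all2 <=%O s U.
Proof.
elim: U V => [|u U IH] V; first by case: V => // _ _; exists [::].
move=> size_UV dom.
have /has_max[v [vV le_vu vmax]] : has (<= u) V.
  by rewrite has_count; apply: leq_trans (dom u); rewrite /= lexx.
have countV t : count (<= t) V = ((v <= t)%O + count (<= t) (rem v V))%N.
  by rewrite (permP (perm_to_rem vV)).
have [s perm_s le_sU] : exists2 s, perm_eq s (rem v V) & all2 <=%O s U.
  apply: IH => [|t]; first by rewrite size_rem // -size_UV.
  have := dom t; rewrite /= countV.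
  have [le_ut|lt_tu] := leP u t; first by rewrite (le_trans le_vu le_ut) !add1n ltnS.
  have [le_vt|_] := leP v t; last by rewrite !add0n.
  have sameV : count (<= t) V = count (<= u) V.
    apply: eq_in_count => z zV /=; apply/idP/idP => [le_zt|le_zu].
      exact: le_trans le_zt (ltW lt_tu).
    exact: le_trans (vmax z zV le_zu) le_vt.
  have := dom u; rewrite /= lexx -sameV countV le_vt /= ltnS leq_add2l.
  move=> le_uU _; apply: (leq_trans _ le_uU); apply: sub_count => z /= le_zt.
  exact: le_trans le_zt (ltW lt_tu).
exists (v :: s); last exact/andP.
by rewrite perm_sym (perm_trans (perm_to_rem vV)) // perm_cons perm_sym.
Qed.

Lemma count_le_interlacing xs ys :
  (forall a, count_mem a xs <= (count_mem a ys).+1)%N ->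
  (forall a b, b < a -> b \in xs -> a \in xs -> has (fun z => (b < z < a)%O) ys) ->
  forall t, (count (<= t) xs <= (count (<= t) ys).+1)%N.
Proof.
move=> mult_le gap t; have [N] := ubnP (count (<= t) xs).
elim: N t => // N IH t.
have [/has_max[a [ax le_at amax]]|] := boolP (has (<= t) xs); last first.
  by rewrite has_count -leqNgt leqn0 => /eqP->.
have -> : count (<= t) xs = count (<= a) xs.
  apply: eq_in_count => z zx /=; apply/idP/idP => [/(amax z zx)//|le_za].
  exact: le_trans le_za le_at.
move=> lt_N.
have le_ys : (count (<= a) ys <= count (<= t) ys)%N.
  by apply: sub_count => z /= le_za; exact: le_trans le_za le_at.
have ax_pos : (0 < count_mem a xs)%N by rewrite -has_count has_pred1.
have := mult_le a.
have [/has_max[b [bx lt_ba bmax]]|/hasPn below] := boolP (has (< a) xs).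
  have no_between : count (fun z => (b < z < a)%O) xs = 0%N.
    apply/eqP; rewrite -leqn0 leqNgt -has_count; apply/hasPn => z zx.
    by apply/negP => /andP[lt_bz lt_za]; move: (bmax z zx lt_za); rewrite leNgt lt_bz.
  (* a Rolle point of ys in ]b, a[ pays for the extra copy of a in xs *)
  have := gap a b lt_ba bx ax; rewrite has_count.
  have := count_le_split b a xs lt_ba; have := count_le_split b a ys lt_ba.
  move=> split_ys split_xs between_pos mult_a.
  rewrite split_xs no_between in lt_N *; rewrite split_ys in le_ys.
  have := IH b ltac:(lia).
  lia.
have -> : count (<= a) xs = count_mem a xs.
  apply: eq_in_count => z zx /=; rewrite le_eqVlt.
  by move: (below z zx); rewrite /= => /negbTE->; rewrite orbF.
have : (count_mem a ys <= count (<= a) ys)%N by apply: sub_count => z /= /eqP->.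
lia.
Qed.

End OrderedCounts.

Section MatchingDistance.
Variable R : realDomainType.
Implicit Types (U V s : seq R).

Lemma match_cost_cons (u v : R) U V :
  match_cost (u :: U) (v :: V) = `|u - v| + match_cost U V.
Proof. by rewrite /match_cost big_ord_recl. Qed.

Lemma sum_sub_le_match_cost U V : size V = size U ->
  \sum_(u <- U) u - \sum_(v <- V) v <= match_cost U V.
Proof.
elim: U V => [|u U IH] [|v V] //=.
  by rewrite !big_nil subrr /match_cost big_ord0.
move=> [/IH le_UV]; rewrite match_cost_cons !big_cons opprD addrACA.
by rewrite lerD ?ler_norm.
Qed.

Lemma match_cost_all2_le U V : all2 <=%R V U ->
  match_cost U V = \sum_(u <- U) u - \sum_(v <- V) v.
Proof.
elim: U V => [|u U IH] [|v V] //=.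
  by rewrite !big_nil subrr /match_cost big_ord0.
move=> /andP[le_vu le_VU]; rewrite match_cost_cons IH // !big_cons opprD addrACA.
by rewrite ger0_norm ?subr_ge0.
Qed.

Lemma d1E U V :
  d1 U V = \big[Num.min/match_cost U V]_(s <- permutations V) match_cost U s.
Proof. by rewrite /d1 foldrE big_map. Qed.

Lemma d1_le_match_cost U V s : perm_eq s V -> d1 U V <= match_cost U s.
Proof. by move=> perm_s; rewrite d1E ge_bigmin_seq ?mem_permutations. Qed.

Lemma le_d1 (L : R) U V :
  (forall s, perm_eq s V -> L <= match_cost U s) -> L <= d1 U V.
Proof.
move=> le_L; rewrite d1E big_seq; apply: le_bigmin => [|s]; first exact: le_L.
by rewrite mem_permutations; exact: le_L.
Qed.

(* The counting hypothesis says that V is stochastically dominated by U. *)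
Lemma d1_dominated U V : size U = size V ->
  (forall t, count (<= t) U <= count (<= t) V)%N ->
  d1 U V = \sum_(u <- U) u - \sum_(v <- V) v.
Proof.
move=> size_UV dom; have [s perm_s le_sU] := perm_all2_le_of_count U V size_UV dom.
apply/eqP; rewrite eq_le; apply/andP; split.
  by rewrite -(perm_big _ perm_s) -match_cost_all2_le //; exact: d1_le_match_cost.
apply: le_d1 => s' perm_s'; rewrite -(perm_big _ perm_s').
by apply: sum_sub_le_match_cost; rewrite (perm_size perm_s').
Qed.

End MatchingDistance.

Lemma mup_deriv (F : fieldType) (a : F) (p : {poly F}) : p^`() != 0 ->
  (mup a p <= (mup a p^`()).+1)%N.
Proof.
move=> p'_neq0; have p_neq0 : p != 0 by apply: contraNneq p'_neq0 => ->; rewrite deriv0.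
case def_k: (mup a p) => [|k] //.
have /dvdpP[q def_p] : ('X - a%:P) ^+ k.+1 %| p by rewrite -mup_geq // def_k.
rewrite ltnS mup_geq // def_p derivM deriv_exp /= exprS.
apply: dvdp_add; apply: dvdp_mull; first exact: dvdp_mulIr.
by rewrite -mulrnAr; apply: dvdp_mull; rewrite -mulr_natr dvdp_mulIl.
Qed.

Lemma coef_size_prod_XsubC (F : comNzRingType) (s : seq F) :
  (\prod_(y <- s) ('X - y%:P))`_(size s) = 1.
Proof.
by have := lead_coef_prod_XsubC s predT id; rewrite lead_coefE size_prod_XsubC.
Qed.

Section DerivProdXsubC.
Context {F : realFieldType} {xs ys : seq F} {c : F}.
Hypothesis c_neq0 : c != 0.
Hypothesis deriv_prod :
  (\prod_(x <- xs) ('X - x%:P))^`() = c *: \prod_(y <- ys) ('X - y%:P).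

Local Notation p := (\prod_(x <- xs) ('X - x%:P)).

Lemma size_roots_deriv : size xs = (size ys).+1.
Proof.
have := polyorder.size_deriv p.
by rewrite deriv_prod size_scale // !size_prod_XsubC => /= ->.
Qed.

Lemma lead_coef_roots_deriv : c = (size xs)%:R.
Proof.
have := coef_deriv p (size ys).
rewrite deriv_prod coefZ coef_size_prod_XsubC mulr1 => ->.
by rewrite -size_roots_deriv coef_size_prod_XsubC.
Qed.

(* Compare the coefficients of degree [(size ys).-1] on both sides. *)
Lemma sum_roots_deriv :
  (size xs)%:R * \sum_(y <- ys) y = (size ys)%:R * \sum_(x <- xs) x.
Proof.
case def_n: (size ys) => [|n].
  by move/size0nil: def_n => ->; rewrite big_nil mulr0 mul0r.
have coef_ys : (\prod_(y <- ys) ('X - y%:P))`_n = - \sum_(y <- ys) y.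
  by rewrite -coefPn_prod_XsubC def_n.
have coef_xs : p`_n.+1 = - \sum_(x <- xs) x.
  by rewrite -coefPn_prod_XsubC size_roots_deriv def_n.
have := coef_deriv p n; rewrite deriv_prod coefZ coef_ys coef_xs.
by rewrite lead_coef_roots_deriv mulrN mulNrn => /oppr_inj->; rewrite mulr_natl.
Qed.

Lemma count_mem_roots_deriv a : (count_mem a xs <= (count_mem a ys).+1)%N.
Proof.
rewrite -!mu_prod_XsubC.
have -> : mup a (\prod_(y <- ys) ('X - y%:P)) = mup a p^`().
  by rewrite deriv_prod -mul_polyC mupMr // rootC.
apply: mup_deriv; rewrite deriv_prod scaler_eq0 negb_or c_neq0.
exact: monic_neq0 (monic_prod_XsubC _ _ _).
Qed.

End DerivProdXsubC.

Lemma rolle_root_deriv {R : rcfType} {p : {poly R}} {a b : R} :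
  b < a -> root p b -> root p a -> exists2 z, b < z < a & root p^`() z.
Proof.
move=> lt_ba /eqP pb /eqP pa; have [z] := poly_rolle lt_ba (etrans pb (esym pa)).
by rewrite in_itv /= => between /eqP; exists z.
Qed.

Lemma count_le_roots_deriv {R : rcfType} {xs ys : seq R} {c : R} : c != 0 ->
  (\prod_(x <- xs) ('X - x%:P))^`() = c *: \prod_(y <- ys) ('X - y%:P) ->
  forall t, (count (<= t) xs <= (count (<= t) ys).+1)%N.
Proof.
move=> c_neq0 deriv_prod; apply: count_le_interlacing.
  exact: count_mem_roots_deriv c_neq0 deriv_prod.
have root_xs z : z \in xs -> root (\prod_(x <- xs) ('X - x%:P)) z.
  by rewrite root_prod_XsubC.
move=> a b lt_ba bx ax; apply/hasP.
have [z between] := rolle_root_deriv lt_ba (root_xs b bx) (root_xs a ax).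
by rewrite deriv_prod rootZ // root_prod_XsubC; exists z.
Qed.

Theorem mainTheorem12 (R : rcfType) (n : nat) (x : 'I_n -> R) (ys : seq R) :
  (0 < n)%N ->
  (forall i, 0 <= x i) ->
  zeros_multiset (\prod_(i < n) ('X - (x i)%:P))^`() ys ->
  d1 [seq x i | i <- enum 'I_n] (0 :: ys) = n%:R^-1 * \sum_(i < n) x i.
Proof.
case: n x => // m x _ x_ge0 [p'_neq0 deriv_prod].
set xs := [seq x i | i <- enum 'I_m.+1].
have prodE : \prod_(i < m.+1) ('X - (x i)%:P) = \prod_(y <- xs) ('X - y%:P).
  by rewrite big_map big_enum.
have sumE : \sum_(i < m.+1) x i = \sum_(y <- xs) y by rewrite big_map big_enum.
rewrite prodE in p'_neq0 deriv_prod; set c := lead_coef _ in deriv_prod.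
have c_neq0 : c != 0 by rewrite lead_coef_eq0.
have size_xs : size xs = m.+1 by rewrite size_map size_enum_ord.
have size_ys : size ys = m.
  by have := size_roots_deriv c_neq0 deriv_prod; rewrite size_xs => -[].
have sum_ys := sum_roots_deriv c_neq0 deriv_prod; rewrite size_xs size_ys in sum_ys.
have dom t : (count (<= t) xs <= count (<= t) (0%R :: ys))%N.
  have [le0t|lt_t0] := leP 0 t.
    by rewrite /= le0t add1n (count_le_roots_deriv c_neq0 deriv_prod).
  rewrite (eq_in_count (a2 := pred0)) ?count_pred0 // => _ /mapP[i _ ->] /=.
  by rewrite leNgt (lt_le_trans lt_t0 (x_ge0 i)).
rewrite sumE d1_dominated //; last by rewrite /= size_xs size_ys.
have m1_neq0 : m.+1%:R != 0 :> R by rewrite pnatr_eq0.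
apply: (mulfI m1_neq0); rewrite big_cons add0r mulrBr sum_ys mulVKf //.
by rewrite mulrSr mulrDl mul1r addrAC subrr add0r.
Qed.
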